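(* Let $k\ge3$ be odd and let $G$ be a $k$-uniform hypergraph. Then the number of minimal canonical H-eigenvectors of the Laplacian tensor $\mathcal D-\mathcal A$ corresponding to the eigenvalue $0$, counted with $\mathbf x$ and $-\mathbf x$ identified, equals the number of connected components of $G$ (singletons included).
   Context: A $k$-uniform hypergraph $G=(V,E)$ has vertex set $V=[n]$ ($n\ge k$) and nonempty edge set $E$ of $k$-element subsets; $E_i=\{e\in E:i\in e\}$, $d_i=|E_i|$. Connected components are maximal sets of vertices pairwise joined by chains of edges with consecutive edges intersecting; an isolated vertex (singleton) is also a connected component. $\mathcal A$: $a_{i_1\dots i_k}=\frac1{(k-1)!}$ if $\{i_1,\dots,i_k\}\in E$, else $0$; $\mathcal D$ diagonal with $d_{i\dots i}=d_i$; so $((\mathcal D-\mathcal A)\mathbf x^{k-1})_i=d_ix_i^{k-1}-\sum_{e\in E_i}\prod_{j\in e\setminus\{i\}}x_j$. A nonzero $\mathbf x\in\mathbb C^n$ is an eigenvector of $\mathcal T$ for $\lambda$ if $(\mathcal T\mathbf x^{k-1})_i=\lambda x_i^{k-1}$ for all $i$; an H-eigenvector is a real eigenvector; canonical means $\max_i|x_i|=1$; an eigenvector of eigenvalue $0$ is minimal if no eigenvector of eigenvalue $0$ has support strictly contained in its support. *)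

From HB Require Import structures.
From mathcomp Require Import all_boot all_order all_algebra.
Set Implicit Arguments. Unset Strict Implicit. Unset Printing Implicit Defensive.
Import Order.TTheory GRing.Theory Num.Theory.
Local Open Scope ring_scope.

(* A hypergraph on vertex set 'I_n is given by its edge set E : {set {set 'I_n}}. *)

Definition edges_at (n : nat) (E : {set {set 'I_n}}) (i : 'I_n) : {set {set 'I_n}} :=
  [set e in E | i \in e].
Definition degree (n : nat) (E : {set {set 'I_n}}) (i : 'I_n) : nat :=
  #|edges_at E i|.

(* ((D - A) x^{k-1})_i = d_i x_i^{k-1} - sum_{e in E_i} prod_{j in e \ i} x_j *)
Definition laplacian_apply (C : numClosedFieldType) (n k : nat)
    (E : {set {set 'I_n}}) (x : 'rV[C]_n) (i : 'I_n) : C :=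
  (degree E i)%:R * x ord0 i ^+ k.-1
  - \sum_(e in edges_at E i) \prod_(j in e :\ i) x ord0 j.

Definition is_eigvec (C : numClosedFieldType) (n k : nat)
    (E : {set {set 'I_n}}) (lambda : C) (x : 'rV[C]_n) : Prop :=
  x != 0 /\ forall i : 'I_n, laplacian_apply k E x i = lambda * x ord0 i ^+ k.-1.

(* H-eigenvector: real eigenvector *)
Definition is_real_vec (C : numClosedFieldType) (n : nat) (x : 'rV[C]_n) : Prop :=
  forall i : 'I_n, x ord0 i \is Num.real.

Definition is_canonical (C : numClosedFieldType) (n : nat) (x : 'rV[C]_n) : Prop :=
  (exists i : 'I_n, `|x ord0 i| = 1) /\ (forall i : 'I_n, `|x ord0 i| <= 1).

Definition support (C : numClosedFieldType) (n : nat) (x : 'rV[C]_n) : {set 'I_n} :=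
  [set i | x ord0 i != 0].

Definition is_minimal0 (C : numClosedFieldType) (n k : nat)
    (E : {set {set 'I_n}}) (x : 'rV[C]_n) : Prop :=
  is_eigvec k E 0 x /\
  forall y : 'rV[C]_n, is_eigvec k E 0 y -> ~ (support y \proper support x).

Definition minimal_canonical_H0 (C : numClosedFieldType) (n k : nat)
    (E : {set {set 'I_n}}) (x : 'rV[C]_n) : Prop :=
  is_minimal0 k E x /\ is_real_vec x /\ is_canonical x.

(* connected components: i ~ j if some edge contains both; take the
   reflexive-transitive closure; isolated vertices form singleton components *)
Definition adj (n : nat) (E : {set {set 'I_n}}) : rel 'I_n :=
  fun i j => [exists e in E, (i \in e) && (j \in e)].

Definition num_components (n : nat) (E : {set {set 'I_n}}) : nat :=
  #|[set [set j | connect (adj E) i j] | i : 'I_n]|.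

(* Both directions rest on a maximum-modulus argument.  If x is annihilated by
   D - A and |x_i| = m is maximal, the equation d_i x_i^(k-1) = sum_e
   prod_{j in e \ i} x_j can only hold if every monomial has modulus m^(k-1),
   which forces |x_j| = m on every edge at i, hence on the component of i.
   So every nonzero null vector is supported on a whole component, which makes
   the indicators (null because no edge leaves a component) minimal.
   Conversely, for a minimal canonical real x, minimality forces x to vanish
   off the component of a vertex with x_i = +-1, and since k - 1 is even every
   monomial at such a vertex equals 1, so x is constant on that component. *)

From Pilot Require Import Defs.
From HB Require Import structures.
From mathcomp Require Import all_boot all_order all_algebra zify.
Import Order.TTheory GRing.Theory Num.Theory.
Set Implicit Arguments. Unset Strict Implicit.
Local Open Scope ring_scope.

Section BoundAttained.
Variables (R : numDomainType) (I : finType).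

Lemma sum_attains_bound (A : {pred I}) (F : I -> R) (M : R) :
  (forall i, i \in A -> F i <= M) -> M *+ #|A| <= \sum_(i in A) F i ->
  forall i, i \in A -> F i = M.
Proof.
move=> leFM ge_sum.
have gap_ge0 i : i \in A -> 0 <= M - F i by move/leFM; rewrite subr_ge0.
have gap_sum0 : \sum_(i in A) (M - F i) = 0.
  apply/eqP; rewrite eq_le sumr_ge0 // andbT sumrB sumr_const subr_le0.
  exact: ge_sum.
move=> i /(psumr_eq0P gap_ge0 gap_sum0) /eqP.
by rewrite subr_eq0 => /eqP.
Qed.

Lemma prod_attains_bound (A : {set I}) (F : I -> R) (m : R) :
  0 < m -> (forall i, i \in A -> 0 <= F i <= m) ->
  \prod_(i in A) F i = m ^+ #|A| -> forall i, i \in A -> F i = m.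
Proof.
move=> m_gt0 F_bnd prodF i Ai.
have /andP[Fi_ge0 Fi_le] := F_bnd i Ai.
have rest_le : \prod_(j in A :\ i) F j <= m ^+ #|A :\ i|.
  rewrite -prodr_const; apply: ler_prod => j /setD1P[_ Aj].
  exact: F_bnd.
apply/eqP; rewrite eq_le Fi_le /=.
have cardA : #|A| = (#|A :\ i|).+1 by rewrite (cardsD1 i A) Ai.
rewrite -(ler_pM2r (exprn_gt0 #|A :\ i| m_gt0)) -exprS -cardA -prodF.
by rewrite (big_setD1 i) //= ler_wpM2l.
Qed.

Lemma real_max_attained (f : I -> R) (i0 : I) :
  (forall i, f i \is Num.real) -> exists i, forall j, f j <= f i.
Proof.
move=> f_real.
suff [i max_i] : exists i, forall j, j \in enum I -> f j <= f i.
  by exists i => j; apply: max_i; rewrite mem_enum.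
elim: (enum I) => [|a s [i max_i]]; first by exists i0.
have [le_ai|le_ia] := real_leP (f_real a) (f_real i).
  by exists i => j; rewrite inE => /orP[/eqP->|/max_i].
exists a => j; rewrite inE => /orP[/eqP->//|/max_i le_ji].
exact: le_trans le_ji (ltW le_ia).
Qed.

End BoundAttained.

Section Components.
Variables (n : nat) (E : {set {set 'I_n}}).

Lemma adj_sym : symmetric (adj E).
Proof.
by move=> i j; apply/existsP/existsP => -[e /andP[eE /andP[ie je]]];
  exists e; rewrite eE ie je.
Qed.

Lemma adj_connect_sym : connect_sym (adj E).
Proof. exact: sym_connect_sym adj_sym. Qed.

Lemma adj_edge e i j : e \in E -> i \in e -> j \in e -> adj E i j.
Proof. by move=> eE ie je; apply/existsP; exists e; rewrite eE ie je. Qed.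

Definition component (i : 'I_n) : {set 'I_n} := [set j | connect (adj E) i j].

Lemma component_refl i : i \in component i.
Proof. by rewrite inE connect0. Qed.

Lemma component_eq i j : j \in component i -> component j = component i.
Proof.
rewrite inE => cij; apply/setP => l; rewrite !inE.
by rewrite (same_connect adj_connect_sym cij).
Qed.

Lemma component_closed (P : {pred 'I_n}) i :
  (forall a b, adj E a b -> a \in P -> b \in P) -> i \in P ->
  forall j, j \in component i -> j \in P.
Proof.
move=> stepP Pi j; rewrite inE => cij.
by rewrite -(closed_connect (intro_closed adj_connect_sym stepP) cij).
Qed.

End Components.

Section NullVectors.
Variables (C : numClosedFieldType) (n k : nat) (E : {set {set 'I_n}}).
Hypothesis k_gt1 : (1 < k)%N.
Hypothesis uniform : forall e, e \in E -> #|e| = k.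

Definition lap_null (x : 'rV[C]_n) : Prop :=
  forall i, laplacian_apply k E x i = 0.

Lemma eigvec0_null x : is_eigvec k E 0 x -> lap_null x.
Proof. by move=> [_ eq_x] i; rewrite eq_x mul0r. Qed.

Definition restrict (S : {set 'I_n}) (x : 'rV[C]_n) : 'rV[C]_n :=
  \row_i (if i \in S then x ord0 i else 0).

Definition indicator (S : {set 'I_n}) : 'rV[C]_n := restrict S (const_mx 1).

Lemma indicatorE S i : indicator S ord0 i = if i \in S then 1 else 0.
Proof. by rewrite !mxE. Qed.

Lemma card_edge_minus e i : e \in E -> i \in e -> #|e :\ i| = k.-1.
Proof. by move=> eE ie; have := cardsD1 i e; rewrite uniform // ie => ->. Qed.

Lemma pred_k_neq0 : (k.-1 == 0%N) = false.
Proof. by apply/negbTE; lia. Qed.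

(* Restricting to a component commutes with the Laplacian: no edge leaves a
   component, and outside it every monomial has a vanishing factor. *)
Lemma restrict_laplacian r x i :
  laplacian_apply k E (restrict (component E r) x) i =
  if i \in component E r then laplacian_apply k E x i else 0.
Proof.
rewrite /laplacian_apply mxE; case: ifP => i_r.
  congr (_ - _); apply: eq_bigr => e; rewrite inE => /andP[eE ie].
  apply: eq_bigr => j /setD1P[_ je]; rewrite mxE.
  suff -> : j \in component E r by [].
  by rewrite -(component_eq i_r) inE connect1 // (adj_edge eE ie je).
rewrite expr0n pred_k_neq0 mulr0 sub0r big1 ?oppr0 // => e.
rewrite inE => /andP[eE ie].
rewrite (eq_bigr (fun _ => 0)) ?prodr_const ?card_edge_minus ?expr0n
  ?pred_k_neq0 // => j /setD1P[_ je].
rewrite mxE; case: ifP => // j_r.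
by rewrite -(component_eq j_r) inE connect1 // (adj_edge eE je ie) in i_r.
Qed.

Lemma ones_null : lap_null (const_mx 1).
Proof.
move=> i; rewrite /laplacian_apply mxE expr1n mulr1.
rewrite (eq_bigr (fun _ => 1)) ?sumr_const ?subrr // => e _.
by rewrite big1 // => j _; rewrite mxE.
Qed.

Lemma indicator_null r : lap_null (indicator (component E r)).
Proof. by move=> i; rewrite restrict_laplacian ones_null; case: ifP. Qed.

(* At a vertex i of maximal modulus m of a null vector, each monomial
   prod_{j in e \ i} x_j attains the bound m^(k-1): the null equation forces
   the triangle inequality d_i m^(k-1) <= sum_e |monomial| to be tight. *)
Lemma edge_monomial_norm x (m : C) i :
  lap_null x -> (forall j, `|x ord0 j| <= m) -> `|x ord0 i| = m ->
  forall e, e \in E -> i \in e -> `|\prod_(j in e :\ i) x ord0 j| = m ^+ k.-1.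
Proof.
move=> null_x le_m xi_m e eE ie.
apply: (@sum_attains_bound _ _ (edges_at E i)
         (fun f => `|\prod_(j in f :\ i) x ord0 j|)); last by rewrite inE eE ie.
  move=> f; rewrite inE => /andP[fE i_f].
  rewrite normr_prod -(card_edge_minus fE i_f) -prodr_const.
  by apply: ler_prod => j _; rewrite normr_ge0 le_m.
apply: le_trans (ler_norm_sum _ _ _).
have /eqP := null_x i; rewrite subr_eq0 => /eqP <-.
by rewrite normrM normr_nat normrX xi_m mulr_natl.
Qed.

Lemma norm_constant_on_edge x (m : C) i :
  lap_null x -> (forall j, `|x ord0 j| <= m) -> `|x ord0 i| = m ->
  forall e, e \in E -> i \in e -> forall j, j \in e -> `|x ord0 j| = m.
Proof.
move=> null_x le_m xi_m e eE ie j je.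
have [-> //|j_neq_i] := eqVneq j i.
have [m0|m_neq0] := eqVneq m 0.
  by apply/eqP; rewrite eq_le le_m m0 normr_ge0.
have m_gt0 : 0 < m by rewrite lt_def m_neq0 -xi_m normr_ge0.
apply: (@prod_attains_bound _ _ (e :\ i) (fun l => `|x ord0 l|)) => //.
- by move=> l _; rewrite normr_ge0 le_m.
- by rewrite -normr_prod (edge_monomial_norm null_x le_m xi_m eE ie)
    (card_edge_minus eE ie).
- by rewrite in_setD1 j_neq_i.
Qed.

Lemma max_modulus_on_component y i :
  lap_null y -> (forall j, `|y ord0 j| <= `|y ord0 i|) ->
  forall j, j \in component E i -> `|y ord0 j| = `|y ord0 i|.
Proof.
move=> null_y max_i j cij.
have : j \in [pred l | `|y ord0 l| == `|y ord0 i|].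
  apply: (component_closed _ _ cij); last by rewrite inE.
  move=> a b /existsP[e /andP[eE /andP[ae be]]]; rewrite !inE => /eqP ya.
  by apply/eqP; apply: (norm_constant_on_edge null_y max_i ya eE ae be).
by rewrite inE => /eqP.
Qed.

Lemma null_support_component y :
  y != 0 -> lap_null y -> exists i, component E i \subset Defs.support y.
Proof.
move=> y_neq0 null_y.
have [j yj_neq0] : exists j, y ord0 j != 0.
  apply/existsP; apply: contraR y_neq0 => /existsPn y0.
  by apply/eqP/rowP => j; rewrite mxE; apply/eqP; move: (y0 j); rewrite negbK.
have [i max_i] :=
  @real_max_attained _ _ (fun l => `|y ord0 l|) j (fun _ => normr_real _).
have {}max_i : forall l, `|y ord0 l| <= `|y ord0 i| := max_i.
exists i; apply/subsetP => l cil; rewrite inE -normr_eq0.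
rewrite (max_modulus_on_component null_y max_i cil) normr_eq0.
by apply: contraNneq yj_neq0 => yi0; have := max_i j; rewrite yi0 normr0 normr_le0.
Qed.

Lemma indicator_minimal_canonical r :
  minimal_canonical_H0 k E (indicator (component E r)).
Proof.
have ind_r : indicator (component E r) ord0 r = 1.
  by rewrite indicatorE component_refl.
have supp_ind : Defs.support (indicator (component E r)) = component E r.
  apply/setP => j; rewrite [in LHS]inE indicatorE.
  by case: ifP; rewrite ?oner_eq0 ?eqxx.
split; [split; [split|] | split].
- by apply/eqP => /rowP/(_ r); rewrite ind_r mxE => /eqP; rewrite oner_eq0.
- by move=> i; rewrite indicator_null mul0r.
- move=> y [y_neq0 eig_y]; rewrite supp_ind properE => /andP[sub_y].
  have [i sub_i] :=
    null_support_component y_neq0 (eigvec0_null (conj y_neq0 eig_y)).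
  have i_r : i \in component E r.
    exact/(subsetP sub_y)/(subsetP sub_i)/component_refl.
  by rewrite -(component_eq i_r) sub_i.
- by move=> j; rewrite indicatorE; case: ifP; rewrite ?real1 ?real0.
- split; first by exists r; rewrite ind_r normr1.
  by move=> j; rewrite indicatorE; case: ifP; rewrite ?normr1 ?normr0 ?ler01.
Qed.

(* A minimal null vector vanishes outside the component of any vertex of its
   support: otherwise its restriction to that component would be a null
   vector with strictly smaller support. *)
Lemma minimal_zero_off_component (x : 'rV[C]_n) i0 :
  is_minimal0 k E x -> x ord0 i0 != 0 ->
  forall j, j \notin component E i0 -> x ord0 j = 0.
Proof.
move=> [[x_neq0 eig_x] min_x] xi0_neq0 j j_out; apply/eqP/negPn/negP => xj_neq0.
pose y : 'rV[C]_n := restrict (component E i0) x.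
have eig_y : is_eigvec k E 0 y.
  split; first by apply/eqP => /rowP/(_ i0); rewrite !mxE component_refl; exact/eqP.
  move=> i; rewrite restrict_laplacian (eigvec0_null (conj x_neq0 eig_x)) mul0r.
  by case: ifP.
apply: (min_x y eig_y); rewrite properE; apply/andP; split.
  by apply/subsetP => l; rewrite !inE mxE; case: ifP; rewrite ?eqxx.
apply/subsetPn; exists j; first by rewrite inE.
by rewrite inE mxE (negbTE j_out) eqxx.
Qed.

Hypothesis odd_k : odd k.

(* For odd k, at a vertex with x_i = +-1 of a real null vector bounded by 1,
   every monomial prod_{j in e \ i} x_j equals 1: since x_i^(k-1) = 1, the null
   equation says that d_i real numbers at most 1 sum to d_i. *)
Lemma edge_monomial_one x i :
  lap_null x -> is_real_vec x -> (forall j, `|x ord0 j| <= 1) ->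
  `|x ord0 i| = 1 -> forall e, e \in E -> i \in e ->
  \prod_(j in e :\ i) x ord0 j = 1.
Proof.
move=> null_x real_x le1 xi1 e eE ie.
have xi_pow : x ord0 i ^+ k.-1 = 1.
  have -> : k.-1 = (2 * k./2)%N.
    by move: (odd_double_half k); rewrite odd_k -muln2; lia.
  by rewrite exprM -real_normK ?xi1 ?expr1n.
apply: (@sum_attains_bound _ _ (edges_at E i)
         (fun f => \prod_(j in f :\ i) x ord0 j)); last by rewrite inE eE ie.
  move=> f; rewrite inE => /andP[fE i_f].
  apply: le_trans (real_ler_norm _) _; first by apply: rpred_prod => l _.
  by rewrite (edge_monomial_norm null_x le1 xi1 fE i_f) expr1n.
have /eqP := null_x i; rewrite subr_eq0 => /eqP <-.
by rewrite xi_pow mulr1.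
Qed.

(* Adjacent vertices carry equal values: both x_a and x_b equal the product of
   x over a common edge. *)
Lemma adjacent_equal x a b :
  lap_null x -> is_real_vec x -> (forall j, `|x ord0 j| <= 1) ->
  `|x ord0 a| = 1 -> adj E a b -> x ord0 b = x ord0 a.
Proof.
move=> null_x real_x le1 xa1 /existsP[e /andP[eE /andP[ae be]]].
have xb1 := norm_constant_on_edge null_x le1 xa1 eE ae be.
have prod_at v : v \in e -> `|x ord0 v| = 1 -> \prod_(j in e) x ord0 j = x ord0 v.
  move=> ve xv1; rewrite (big_setD1 v) //=.
  by rewrite (edge_monomial_one null_x real_x le1 xv1 eE ve) mulr1.
by rewrite -(prod_at a) ?(prod_at b).
Qed.

Lemma canonical_constant_on_component x i0 :
  lap_null x -> is_real_vec x -> (forall j, `|x ord0 j| <= 1) ->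
  `|x ord0 i0| = 1 -> forall j, j \in component E i0 -> x ord0 j = x ord0 i0.
Proof.
move=> null_x real_x le1 xi0 j cj.
have : j \in [pred l | x ord0 l == x ord0 i0].
  apply: (component_closed _ _ cj); last by rewrite inE.
  move=> a b ab; rewrite !inE => /eqP xa.
  have xa1 : `|x ord0 a| = 1 by rewrite xa.
  by rewrite (adjacent_equal null_x real_x le1 xa1 ab) xa.
by rewrite inE => /eqP.
Qed.

Lemma minimal_canonical_indicator (x : 'rV[C]_n) :
  minimal_canonical_H0 k E x ->
  exists i0, x = indicator (component E i0) \/ x = - indicator (component E i0).
Proof.
move=> [min_x [real_x [[i0 xi0] le1]]].
have null_x := eigvec0_null min_x.1.
have xi0_neq0 : x ord0 i0 != 0 by rewrite -normr_eq0 xi0 oner_eq0.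
have const_x := canonical_constant_on_component null_x real_x le1 xi0.
have zero_x := minimal_zero_off_component min_x xi0_neq0.
exists i0; have /eqP := xi0; rewrite real_eqr_norml // ler01 andbT.
case/orP=> /eqP xi0_pm; [left|right]; apply/rowP => j; rewrite !mxE.
all: by case: ifP => j_in;
  [rewrite const_x // xi0_pm | rewrite zero_x ?j_in ?oppr0].
Qed.

Lemma indicator_inj : injective indicator.
Proof.
move=> S T /rowP eqST; apply/setP => j; have := eqST j; rewrite !indicatorE.
by do 2 case: ifP => //; move=> _ _ /eqP; rewrite ?oner_eq0 // eq_sym oner_eq0.
Qed.

Lemma indicator_neq_opp (S T : {set 'I_n}) i :
  i \in S -> indicator S != - indicator T.
Proof.
move=> iS; apply/eqP => /rowP/(_ i); rewrite [RHS]mxE !indicatorE iS.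
case: ifP => _ /eqP; last by rewrite oppr0 oner_eq0.
by rewrite -addr_eq0 -mulr2n pnatr_eq0.
Qed.

End NullVectors.

Theorem proposition5p3 (C : numClosedFieldType) (n k : nat)
    (E : {set {set 'I_n}})
    (Hk3 : (3 <= k)%N) (Hodd : odd k) (Hkn : (k <= n)%N)
    (HE : E != set0) (Hunif : forall e, e \in E -> #|e| = k) :
  exists s : seq 'rV[C]_n,
    [/\ (forall x, x \in s -> minimal_canonical_H0 k E x),
        (forall x, minimal_canonical_H0 k E x -> (x \in s) || (- x \in s)),
        uniq (s ++ map (fun x => - x) s)
      & size s = num_components E].
Proof.
have k_gt1 : (1 < k)%N by apply: leq_trans Hk3.
pose components := [set component E i | i : 'I_n].
exists [seq indicator C c | c <- enum components]; split.
- move=> x /mapP[c]; rewrite mem_enum => /imsetP[i _ ->] ->.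
  exact: indicator_minimal_canonical.
- move=> x /(minimal_canonical_indicator k_gt1 Hunif Hodd)[i [->|->]];
    apply/orP; [left|right]; rewrite ?opprK; apply: map_f;
    rewrite mem_enum; exact: imset_f.
- rewrite cat_uniq (map_inj_uniq oppr_inj) (map_inj_uniq (@indicator_inj C n)).
  rewrite enum_uniq /= andbT; apply/hasPn => _ /mapP[_ /mapP[T _ ->] ->].
  apply/negP => /mapP[c]; rewrite mem_enum => /imsetP[i _ ->] /esym/eqP.
  by apply/negP/indicator_neq_opp/component_refl.
- by rewrite size_map -cardE.
Qed.
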